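(* Let $k\ge1$, let $p_1,\dots,p_k$ be a pmf (the conditional pmf $P_{X_k}(x_i)=P_X(x_i)/q_k$ described in the context), and let $a=\frac{1}{\lambda q_k}>0$. For a vector of real codeword lengths $\ell=(\ell(x_1),\dots,\ell(x_k))$ write $\mathbb{E}[L]=\sum_{i=1}^k p_i\ell(x_i)$ and $\mathbb{E}[L^2]=\sum_{i=1}^k p_i\ell(x_i)^2$. Consider the problem $$\min_{\ell}\ \frac{\mathbb{E}[L^2]+2a\mathbb{E}[L]+2a^2}{2(\mathbb{E}[L]+a)}+\mathbb{E}[L]\quad\text{s.t.}\quad \sum_{i=1}^k 2^{-\ell(x_i)}\le 1,\ \ \ell(x_i)\in\mathbb{R}^+,\ i=1,\dots,k.$$ Then the age-optimal real codeword lengths (optimal solutions of this problem) satisfy $\sum_{i=1}^k 2^{-\ell(x_i)}=1$.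
   Context: Setting: update packets arrive at a transmitter as a Poisson process of rate $\lambda>0$, each carrying an i.i.d. realization of $X$ with pmf $P_X$ on $\{x_1,\dots,x_n\}$ ordered with non-increasing probabilities; only the $k$ most probable realizations are encoded, $q_k=\sum_{\ell=1}^kP_X(x_\ell)$, and $P_{X_k}(x_i)=P_X(x_i)/q_k$ for $i\le k$. The objective above is the long term average age at the receiver under this highest $k$ selective encoding scheme with blocking and service time equal to codeword length; the integrality constraint on lengths has been relaxed to positive reals. *)

From HB Require Import structures.
From mathcomp Require Import all_boot all_order all_algebra.
From mathcomp Require Import all_classical all_reals all_analysis.
Set Implicit Arguments. Unset Strict Implicit. Unset Printing Implicit Defensive.
Import Order.TTheory GRing.Theory Num.Theory.
Local Open Scope ring_scope.

Section AoI.
Variables (R : realType) (k : nat).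

Definition EL (p l : 'I_k -> R) : R := \sum_(i < k) p i * l i.
Definition EL2 (p l : 'I_k -> R) : R := \sum_(i < k) p i * (l i) ^+ 2.

Definition kraft (l : 'I_k -> R) : R := \sum_(i < k) (2 : R) `^ (- l i).

Definition age_obj (a : R) (p l : 'I_k -> R) : R :=
  (EL2 p l + 2 * a * EL p l + 2 * a ^+ 2) / (2 * (EL p l + a)) + EL p l.

Definition feasible (l : 'I_k -> R) : Prop :=
  kraft l <= 1 /\ forall i, 0 < l i.

Definition age_optimal (a : R) (p l : 'I_k -> R) : Prop :=
  feasible l /\ forall l', feasible l' -> age_obj a p l <= age_obj a p l'.

End AoI.

From HB Require Import structures.
From mathcomp Require Import all_boot all_order all_algebra.
From mathcomp Require Import all_classical all_reals all_analysis.
From mathcomp Require Import ring.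
Import Order.TTheory GRing.Theory Num.Theory.
Local Open Scope ring_scope.

(* If the Kraft sum of an optimal [l] were [s < 1], shrinking every length by
   a factor [t < 1] close enough to [1] would keep the Kraft sum below
   [2 ^ ((1 - t) max l) * s <= 1], while the objective, as a function of
   [E[L]] and [E[L^2]], strictly decreases when these are replaced by
   [t E[L]] and [t^2 E[L^2]]. *)

Lemma age_ratio_scale_lt (R : realFieldType) (a E E2 t : R) :
  0 <= a -> 0 < E -> 0 <= E2 -> 0 < t < 1 ->
  (t ^+ 2 * E2 + 2 * a * (t * E) + 2 * a ^+ 2) / (2 * (t * E + a)) + t * E <
  (E2 + 2 * a * E + 2 * a ^+ 2) / (2 * (E + a)) + E.
Proof.
move=> a_ge0 E_gt0 E2_ge0 /andP[t_gt0 t_lt1].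
have tE_gt0 : 0 < t * E by rewrite mulr_gt0.
apply: ler_ltD; last by rewrite gtr_pMl.
rewrite ler_pdivrMr ?mulr_gt0 ?ltr_wpDr // [leRHS]mulrAC.
rewrite ler_pdivlMr ?mulr_gt0 ?ltr_wpDr // -subr_ge0.
have -> : (E2 + 2 * a * E + 2 * a ^+ 2) * (2 * (t * E + a)) -
    (t ^+ 2 * E2 + 2 * a * (t * E) + 2 * a ^+ 2) * (2 * (E + a)) =
    2 * E2 * (t * E * (1 - t) + a * (1 - t ^+ 2)) by ring.
have t2_lt1 : t ^+ 2 < 1 by rewrite expr2 mulr_ilt1 ?ltW.
by rewrite !mulr_ge0 ?addr_ge0 ?mulr_ge0 ?subr_ge0 // ltW.
Qed.

Lemma sum_ord_gt0 (R : numDomainType) (k : nat) (F : 'I_k -> R) :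
  (0 < k)%N -> (forall i, 0 < F i) -> 0 < \sum_(i < k) F i.
Proof.
move=> k_gt0 F_gt0; rewrite (bigD1 (Ordinal k_gt0)) //= ltr_pwDl //.
by rewrite sumr_ge0 // => i _; rewrite ltW.
Qed.

Lemma powR2_eq_inv (R : realType) (s : R) :
  0 < s < 1 -> exists2 c : R, 0 < c & 2 `^ c = s^-1.
Proof.
move=> /andP[s_gt0 s_lt1].
have ln2_gt0 : 0 < ln (2 : R) by rewrite ln_gt0 // ltr1n.
exists (- ln s / ln 2); first by rewrite divr_gt0 // oppr_gt0 ln_lt0 // s_gt0.
rewrite /powR ifF ?pnatr_eq0 // mulrVK ?unitfE ?gt_eqF //.
by rewrite expRN lnK // posrE.
Qed.

Section Scaling.
Local Set Implicit Arguments.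
Local Unset Strict Implicit.
Variables (R : realType) (k : nat).
Implicit Types (p l : 'I_k -> R) (t : R).

Definition scale_len t l := fun i => t * l i.

Lemma EL_scale p l t : EL p (scale_len t l) = t * EL p l.
Proof. by rewrite /EL mulr_sumr; apply: eq_bigr => i _; rewrite /scale_len; ring. Qed.

Lemma EL2_scale p l t : EL2 p (scale_len t l) = t ^+ 2 * EL2 p l.
Proof. by rewrite /EL2 mulr_sumr; apply: eq_bigr => i _; rewrite /scale_len; ring. Qed.

Lemma age_obj_scale_lt a p l t :
  0 <= a -> 0 < EL p l -> 0 <= EL2 p l -> 0 < t < 1 ->
  age_obj a p (scale_len t l) < age_obj a p l.
Proof. by rewrite /age_obj EL_scale EL2_scale; exact: age_ratio_scale_lt. Qed.

Lemma kraft_shrink_le l e M :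
  0 <= e -> (forall i, l i <= M) ->
  kraft (scale_len (1 - e) l) <= 2 `^ (e * M) * kraft l.
Proof.
move=> e_ge0 l_leM; rewrite /kraft mulr_sumr ler_sum // => i _.
have -> : - scale_len (1 - e) l i = e * l i + - l i by rewrite /scale_len; ring.
rewrite powRD ?pnatr_eq0 ?implybT // ler_wpM2r ?powR_ge0 //.
by rewrite ler_powR ?ler1n // ler_wpM2l.
Qed.

Lemma kraft_lt1_shrink l :
  (0 < k)%N -> (forall i, 0 < l i) -> kraft l < 1 ->
  exists2 t, 0 < t < 1 & feasible (scale_len t l).
Proof.
move=> k_gt0 l_gt0 kraft_lt1.
have kraft_gt0 : 0 < kraft l by apply: sum_ord_gt0 => // i; rewrite powR_gt0.
have [c c_gt0 pow_c] : exists2 c : R, 0 < c & 2 `^ c = (kraft l)^-1.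
  by apply: powR2_eq_inv; rewrite kraft_gt0.
set M := \sum_(i < k) l i.
have l_leM i : l i <= M.
  by rewrite /M (bigD1 i) //= lerDl sumr_ge0 // => j _; rewrite ltW.
have M_gt0 : 0 < M by apply: sum_ord_gt0.
pose e := Num.min (1 / 2) (c / M).
have e_gt0 : 0 < e by rewrite lt_min !divr_gt0.
have e_lt1 : e < 1 by rewrite gt_min ltr_pdivrMr // mul1r ltr1n.
have eM_le_c : e * M <= c by rewrite -ler_pdivlMr // ge_min lexx orbT.
exists (1 - e); first by rewrite subr_gt0 e_lt1 gtrBl e_gt0.
split=> [|i]; last by rewrite mulr_gt0 ?subr_gt0.
apply: le_trans (kraft_shrink_le (ltW e_gt0) l_leM) _.
rewrite -[X in _ <= X](mulVf (lt0r_neq0 kraft_gt0)) -pow_c.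
by apply: ler_wpM2r; [exact: ltW | rewrite ler_powR ?ler1n].
Qed.

End Scaling.

Theorem lemma1 (R : realType) (k : nat) (lam q : R) (p l : 'I_k -> R) :
  (1 <= k)%N ->
  0 < lam -> 0 < q -> q <= 1 ->
  (forall i, 0 < p i) -> \sum_(i < k) p i = 1 ->
  age_optimal (1 / (lam * q)) p l ->
  kraft l = 1.
Proof.
move=> k_gt0 lam_gt0 q_gt0 _ p_gt0 _ [[kraft_le1 l_gt0] opt].
have a_ge0 : 0 <= 1 / (lam * q) by rewrite ltW // divr_gt0 // mulr_gt0.
have EL_gt0 : 0 < EL p l by apply: sum_ord_gt0 => // i; rewrite mulr_gt0.
have EL2_ge0 : 0 <= EL2 p l by rewrite sumr_ge0 // => i _; rewrite ltW ?mulr_gt0 ?exprn_gt0.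
apply/eqP; rewrite eq_le kraft_le1 leNgt; apply/negP => kraft_lt1.
have [t t01 feas] := kraft_lt1_shrink k_gt0 l_gt0 kraft_lt1.
by move: (opt _ feas); rewrite leNgt age_obj_scale_lt.
Qed.
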